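(* Let $\mathcal{X}$ be a finite set and $\underline{Q}$ a lower transition rate operator on $\mathcal{L}(\mathcal{X})$. Then for any $t\ge0$: $\underline{T}_t$ is regularly absorbing if and only if it is 1-step absorbing.
   Context: $\mathcal{L}(\mathcal{X})$ is the set of real-valued functions on $\mathcal{X}$ with pointwise operations and order, real constants identified with constant functions, $\mathbb{I}_A$ the indicator of $A\subseteq\mathcal{X}$, $\mathbb{I}_x\coloneqq\mathbb{I}_{\{x\}}$; $\mathbb{N}=\{1,2,\dots\}$. A lower transition rate operator is a map $\underline{Q}\colon\mathcal{L}(\mathcal{X})\to\mathcal{L}(\mathcal{X})$ such that for all $f,g$, $\lambda\ge0$, $\mu\in\mathbb{R}$, $x,y\in\mathcal{X}$: $\underline{Q}(\mu)=0$; $\underline{Q}(f+g)\ge\underline{Q}f+\underline{Q}g$; $\underline{Q}(\lambda f)=\lambda\underline{Q}f$; $x\ne y\Rightarrow\underline{Q}(\mathbb{I}_y)(x)\ge0$. For each $f$, $t\mapsto\underline{T}_tf$ is the unique solution on $[0,\infty)$ of $\frac{d}{dt}\underline{T}_tf=\underline{Q}\,\underline{T}_tf$ with $\underline{T}_0f=f$ (existence and uniqueness are known); $\underline{T}_t$ denotes the operator $f\mapsto\underline{T}_tf$. For an operator $\underline{T}$ let $\overline{T}f\coloneqq-\underline{T}(-f)$ and powers denote composition. $\underline{T}$ is regularly absorbing if $\mathcal{X}_{\mathrm{RA}}\coloneqq\{x\colon\exists n\in\mathbb{N},\ \min\overline{T}^n\mathbb{I}_x>0\}\neq\emptyset$ and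 for every $x\in\mathcal{X}\setminus\mathcal{X}_{\mathrm{RA}}$ there is $n\in\mathbb{N}$ with $\underline{T}^n\mathbb{I}_{\mathcal{X}_{\mathrm{RA}}}(x)>0$. $\underline{T}$ is 1-step absorbing if $\mathcal{X}_{\mathrm{1A}}\coloneqq\{x\colon\min\overline{T}\mathbb{I}_x>0\}\neq\emptyset$ and $\underline{T}\mathbb{I}_{\mathcal{X}_{\mathrm{1A}}}(x)>0$ for every $x\in\mathcal{X}\setminus\mathcal{X}_{\mathrm{1A}}$. *)

From HB Require Import structures.
From mathcomp Require Import all_boot all_order all_algebra.
From mathcomp Require Import all_classical all_reals all_analysis.
Set Implicit Arguments. Unset Strict Implicit. Unset Printing Implicit Defensive.
Import Order.TTheory GRing.Theory Num.Theory.
Import numFieldNormedType.Exports.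
Local Open Scope classical_set_scope.
Local Open Scope ring_scope.

Section Defs.
Variables (R : realType) (X : finType).

Definition op := (X -> R) -> (X -> R).

Definition ind (A : set X) : X -> R := fun y => (`[< A y >])%:R.

Definition lower_rate_op (Q : op) : Prop :=
  [/\ (forall mu : R, Q (fun _ => mu) = (fun _ => 0)),
      (forall f g x, Q f x + Q g x <= Q (f \+ g) x),
      (forall (lam : R) f, 0 <= lam -> Q (fun y => lam * f y) = (fun y => lam * Q f y)) &
      (forall x y : X, x != y -> 0 <= Q (ind [set y]) x)].

Definition upper (T : op) : op := fun f y => - T (fun z => - f z) y.

(* "min f > 0" for a function on the finite set X *)
Definition min_pos (f : X -> R) : Prop := forall y, 0 < f y.

Definition X_RA (T : op) : set X :=
  [set x | exists n : nat, (0 < n)%N /\ min_pos (iter n (upper T) (ind [set x]))].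

Definition regularly_absorbing (T : op) : Prop :=
  X_RA T !=set0 /\
  (forall x, ~ X_RA T x -> exists n : nat, (0 < n)%N /\ 0 < iter n T (ind (X_RA T)) x).

Definition X_1A (T : op) : set X := [set x | min_pos (upper T (ind [set x]))].

Definition one_step_absorbing (T : op) : Prop :=
  X_1A T !=set0 /\ (forall x, ~ X_1A T x -> 0 < T (ind (X_1A T)) x).

(* T is the lower transition semigroup of Q: for every f, t |-> T t f solves
   d/dt T_t f = Q (T_t f) on [0, +oo) (one-sided derivative at 0), T_0 f = f. *)
Definition is_lower_semigroup (Q : op) (T : R -> op) : Prop :=
  forall f : X -> R, T 0 f = f /\
    forall (x : X) (t : R), 0 <= t ->
      (fun h : R => h^-1 * (T (t + h) f x - T t f x))
        @ within (fun h : R => 0 <= t + h) ((0 : R)^') --> Q (T t f) x.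

End Defs.

From HB Require Import structures.
From mathcomp Require Import all_boot all_order all_algebra.
From mathcomp Require Import all_classical all_reals all_analysis.
From mathcomp Require Import ring lra.
Set Implicit Arguments. Unset Strict Implicit. Unset Printing Implicit Defensive.
Import Order.TTheory GRing.Theory Num.Theory.
Import numFieldNormedType.Exports.
Local Open Scope classical_set_scope.
Local Open Scope ring_scope.

(* For [t > 0] the support of [T_t 1_A] is invariant under [T_t]. If
   [T_t 1_A] vanishes at [z], then [s |-> T_s 1_A z >= 0] is minimal at [s = t],
   so its left derivative [Q (T_t 1_A) z] is nonpositive; by superadditivity of
   [Q] this forces [Q 1_P z <= 0] for the support [P] of [T_t 1_A], and a
   comparison principle for [u' >= Q u] then yields [T_t 1_P <= 1_P]. Hence every
   iterate [T_t^n 1_A] is supported in [P]; the same argument for the upper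
   operator identifies [X_RA] with [X_1A]. For [t = 0], [T_0] is the identity. *)

Section Indicators.
Variables (R : realType) (X : finType).

Lemma ind_in (A : set X) y : A y -> ind R A y = 1.
Proof. by move=> Ay; rewrite /ind asboolT. Qed.

Lemma ind_out (A : set X) y : ~ A y -> ind R A y = 0.
Proof. by move=> Ay; rewrite /ind asboolF. Qed.

Lemma ind_ge0 (A : set X) y : 0 <= ind R A y.
Proof. by rewrite /ind ler0n. Qed.

Lemma ind_gt0 (A : set X) y : 0 < ind R A y -> A y.
Proof. by apply: contraPP => /ind_out ->; rewrite ltxx. Qed.

Lemma le_ind (A B : set X) : A `<=` B -> forall y, ind R A y <= ind R B y.
Proof.
move=> AB y; case: (pselect (A y)) => Ay; first by rewrite !ind_in //; apply: AB.
by rewrite ind_out // ind_ge0.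
Qed.

Lemma ind_setC (A : set X) y : ind R (~` A) y = 1 - ind R A y.
Proof.
case: (pselect (A y)) => Ay; first by rewrite ind_out ?ind_in ?subrr.
by rewrite ind_in // ind_out ?subr0.
Qed.

Lemma pos_lbound (g : X -> R) : exists2 c : R, 0 < c & forall y, 0 < g y -> c <= g y.
Proof.
case: (pselect (exists y, 0 < g y)) => [[y0 gy0]|none]; last first.
  by exists 1 => // y gy; exfalso; apply: none; exists y.
have Py0 : [pred y | 0 < g y] y0 by [].
case: (arg_minP g Py0) => y1 gy1 gmin.
by exists (g y1) => // y gy; apply: gmin.
Qed.

Lemma le_sum_ind (g : X -> R) z : (forall y, 0 <= g y) ->
  g z <= (\sum_y g y) * ind R [set y | 0 < g y] z.
Proof.
move=> g0; case: (pselect (0 < g z)) => gz; last by rewrite ind_out // mulr0 leNgt; apply/negP.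
by rewrite ind_in // mulr1 (bigD1 z) //= lerDl sumr_ge0.
Qed.

End Indicators.

Section HalflineDerivative.
Variable R : realType.

Definition halfline_derive (g : R -> R) (r L : R) : Prop :=
  (fun h : R => h^-1 * (g (r + h) - g r))
    @ within (fun h : R => 0 <= r + h) ((0 : R)^') --> L.

Lemma halfline_deriveP g r L : halfline_derive g r L -> forall e, 0 < e ->
  exists2 d : R, 0 < d & forall h, h != 0 -> `|h| < d -> 0 <= r + h ->
    `|L - h^-1 * (g (r + h) - g r)| < e.
Proof.
move=> /cvgrPdist_lt gL e e0.
have /nbhs_ballP [d d0 Hd] := gL e e0.
exists d => // h h0 hd rh.
by apply: Hd => //; rewrite /ball /= sub0r normrN.
Qed.

Lemma halfline_derive_cst (c : R) r : halfline_derive (fun=> c) r 0.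
Proof.
rewrite /halfline_derive (_ : (fun h : R => _) = fun=> 0); first exact: cvg_cst.
by apply: funext => h; rewrite subrr mulr0.
Qed.

Lemma halfline_deriveN g r L :
  halfline_derive g r L -> halfline_derive (fun s => - g s) r (- L).
Proof.
move=> /cvgN gL; rewrite /halfline_derive.
by rewrite (_ : (fun h : R => _) = fun h => - (h^-1 * (g (r + h) - g r))) //;
  apply: funext => h; ring.
Qed.

Lemma halfline_deriveB g1 g2 r L1 L2 :
  halfline_derive g1 r L1 -> halfline_derive g2 r L2 ->
  halfline_derive (fun s => g1 s - g2 s) r (L1 - L2).
Proof.
move=> g1L g2L; rewrite /halfline_derive.
rewrite (_ : (fun h : R => _) =
  fun h => h^-1 * (g1 (r + h) - g1 r) - h^-1 * (g2 (r + h) - g2 r)).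
  exact: cvgB g1L g2L.
by apply: funext => h; ring.
Qed.

Lemma halfline_deriveMl (c : R) g r L :
  halfline_derive g r L -> halfline_derive (fun s => c * g s) r (c * L).
Proof.
move=> gL; rewrite /halfline_derive.
rewrite (_ : (fun h : R => _) = fun h => c * (h^-1 * (g (r + h) - g r))).
  exact: cvgMl_tmp.
by apply: funext => h; ring.
Qed.

Lemma halfline_derive_left_min g r L k : halfline_derive g r L -> 0 < r ->
  (forall s, 0 <= s -> s < r -> g r + k * r <= g s + k * s) -> L + k <= 0.
Proof.
move=> gL r0 gmin; rewrite leNgt; apply/negP => Lk.
have [d d0 Hd] := halfline_deriveP gL Lk.
pose m := Num.min d r.
have m0 : 0 < m by rewrite lt_min d0 r0.
have md : m <= d by rewrite ge_min lexx.
have mr : m <= r by rewrite ge_min lexx orbT.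
pose h := - (m / 2).
have h_lt0 : h < 0 by rewrite oppr_lt0 divr_gt0.
have rh0 : 0 <= r + h by rewrite /h; lra.
have hd : `|h| < d by rewrite ltr0_norm // /h opprK; lra.
have quot_le : h^-1 * (g (r + h) - g r) <= - k.
  have incr : - k * h <= g (r + h) - g r.
    by have := gmin (r + h) rh0 ltac:(lra); rewrite mulrDr; lra.
  have hV_le0 : h^-1 <= 0 by rewrite invr_le0 ltW.
  have := ler_wnM2l hV_le0 incr.
  by rewrite mulrCA mulNr mulVf ?ltr0_neq0 // mulr1.
have := Hd h (ltr0_neq0 h_lt0) hd rh0.
by rewrite ltr_norml; lra.
Qed.

Lemma halfline_derive_left_min0 g r L : halfline_derive g r L -> 0 < r ->
  (forall s, 0 <= s -> s < r -> g r <= g s) -> L <= 0.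
Proof.
move=> gL r0 gmin; rewrite -[L]addr0.
by apply: halfline_derive_left_min gL r0 _ => s s0 sr; rewrite !mul0r !addr0 gmin.
Qed.

Lemma halfline_derive_right_cont g r L : halfline_derive g r L -> 0 <= r ->
  forall e, 0 < e -> exists2 d : R, 0 < d &
    forall h, 0 < h -> h < d -> `|g (r + h) - g r| < e.
Proof.
move=> gL r0 e e0.
have [d1 d10 Hd] := halfline_deriveP gL ltr01.
have L1 : 0 < `|L| + 1 by rewrite ltr_wpDl.
exists (Num.min d1 (e / (`|L| + 1))); first by rewrite lt_min d10 divr_gt0.
move=> h h0; rewrite lt_min => /andP [hd1 hde].
have := Hd h (lt0r_neq0 h0) ltac:(rewrite gtr0_norm //) ltac:(lra).
set q := h^-1 * _ => Lq.
have -> : g (r + h) - g r = h * q by rewrite /q mulrA mulfV ?gt_eqF // mul1r.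
have q_lt : `|q| < `|L| + 1.
  by have := ler_normD (q - L) L; rewrite subrK distrC; lra.
rewrite normrM gtr0_norm //.
have : h * `|q| <= h * (`|L| + 1) by rewrite ler_wpM2l ?ltW.
by rewrite ltr_pdivlMr // in hde; lra.
Qed.

End HalflineDerivative.

Section LowerRateOperator.
Variables (R : realType) (X : finType) (Q : op R X).
Hypothesis HQ : lower_rate_op Q.

Lemma lrate_cst (mu : R) x : Q (fun=> mu) x = 0.
Proof. by case: HQ => + _ _ _ => ->. Qed.

Lemma lrate_superadd (f g : X -> R) x : Q f x + Q g x <= Q (fun y => f y + g y) x.
Proof. by case: HQ => _ + _ _; apply. Qed.

Lemma lrate_scale (c : R) (f : X -> R) x : 0 <= c -> Q (fun y => c * f y) x = c * Q f x.
Proof. by case: HQ => _ _ + _ => /[apply] ->. Qed.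

Lemma lrate_ind (x y : X) : x != y -> 0 <= Q (ind R [set y]) x.
Proof. by case: HQ => _ _ _; apply. Qed.

Lemma lrate_addc (f : X -> R) (c : R) x : Q (fun y => f y + c) x = Q f x.
Proof.
apply/eqP; rewrite eq_le; apply/andP; split.
- have := lrate_superadd (fun y => f y + c) (fun=> - c) x.
  rewrite (_ : (fun y => f y + c + - c) = f) ?lrate_cst ?addr0 //.
  by apply: funext => y; rewrite addrK.
- by have := lrate_superadd f (fun=> c) x; rewrite lrate_cst addr0.
Qed.

Lemma lrate_sum (I : Type) (s : seq I) (F : I -> X -> R) x :
  \sum_(i <- s) Q (F i) x <= Q (fun y => \sum_(i <- s) F i y) x.
Proof.
elim: s => [|a s IH].
  rewrite big_nil (_ : (fun y => _) = fun=> 0) ?lrate_cst //.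
  by apply: funext => y; rewrite big_nil.
rewrite big_cons (_ : (fun y => _) = fun y => F a y + \sum_(i <- s) F i y).
  by apply: le_trans (lrate_superadd _ _ x); rewrite lerD2l.
by apply: funext => y; rewrite big_cons.
Qed.

(* Writing [g - g x] as a nonnegative combination of indicators of singletons,
   only the off-diagonal rates [Q 1_z x], which are nonnegative, contribute. *)
Lemma lrate_min_ge0 (g : X -> R) x : (forall y, g x <= g y) -> 0 <= Q g x.
Proof.
move=> gmin; pose h y := g y - g x.
rewrite (_ : g = fun y => h y + g x); last by apply: funext => y; rewrite subrK.
rewrite lrate_addc.
rewrite (_ : h = fun y => \sum_z h z * ind R [set z] y); last first.
  apply: funext => y; rewrite (bigD1 y) //= ind_in // mulr1 big1 ?addr0 //.
  by move=> z zy; rewrite ind_out ?mulr0 // => /= yz; rewrite yz eqxx in zy.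
apply: le_trans (lrate_sum _ _ x); apply: sumr_ge0 => z _.
have hz : 0 <= h z by rewrite subr_ge0.
rewrite lrate_scale //; case: (eqVneq x z) => [<-|xz]; first by rewrite /h subrr mul0r.
by rewrite mulr_ge0 ?lrate_ind.
Qed.

Lemma lrate_max_le0 (g : X -> R) x : (forall y, g y <= g x) -> Q g x <= 0.
Proof.
move=> gmax; have := lrate_superadd g (fun y => - g y) x.
rewrite (_ : (fun y => g y + - g y) = fun=> 0) ?lrate_cst; last first.
  by apply: funext => y; rewrite subrr.
have : 0 <= Q (fun y => - g y) x by apply: lrate_min_ge0 => y; rewrite lerN2.
lra.
Qed.

Lemma lrate_zero_ge0 (h : X -> R) z : (forall y, 0 <= h y) -> h z = 0 -> 0 <= Q h z.
Proof. by move=> h0 hz; apply: lrate_min_ge0 => y; rewrite hz. Qed.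

Definition lower_closed (C : set X) := forall z, ~ C z -> Q (ind R C) z <= 0.
Definition upper_closed (C : set X) := forall z, ~ C z -> upper Q (ind R C) z <= 0.

Lemma lower_closed_rate C : lower_closed C -> forall x, Q (ind R C) x <= 0.
Proof.
move=> Cclosed x; case: (pselect (C x)) => Cx; last exact: Cclosed.
rewrite (_ : ind R C = fun y => - ind R (~` C) y + 1); last first.
  by apply: funext => y; rewrite ind_setC; ring.
rewrite lrate_addc; apply: lrate_max_le0 => y.
have -> : ind R (~` C) x = 0 by apply: ind_out => /(_ Cx).
by rewrite oppr0 oppr_le0 ind_ge0.
Qed.

Lemma upper_closed_rate C : upper_closed C -> forall x, upper Q (ind R C) x <= 0.
Proof.
move=> Cclosed x; case: (pselect (C x)) => Cx; last exact: Cclosed.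
rewrite /upper (_ : (fun y => _) = fun y => ind R (~` C) y + -1); last first.
  by apply: funext => y; rewrite ind_setC; ring.
rewrite lrate_addc oppr_le0; apply: lrate_zero_ge0 => [y|]; first exact: ind_ge0.
by rewrite ind_out // => /(_ Cx).
Qed.

(* Split [G] as [c 1_S + h] with [S] its support, [0 < c <= G] on [S], and
   [h >= 0] vanishing at [z]. *)
Lemma lrate_support_closed (G : X -> R) z : (forall y, 0 <= G y) -> G z = 0 ->
  Q G z <= 0 -> Q (ind R [set y | 0 < G y]) z <= 0.
Proof.
move=> G0 Gz QG; have [c c0 c_le] := pos_lbound G.
pose S := [set y | 0 < G y]; pose h y := G y - c * ind R S y.
have h0 y : 0 <= h y.
  case: (pselect (S y)) => Sy; first by rewrite /h ind_in // mulr1 subr_ge0 c_le.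
  by rewrite /h ind_out // mulr0 subr0.
have hz : h z = 0 by rewrite /h Gz ind_out ?mulr0 ?subr0 // /S /= Gz ltxx.
have split : c * Q (ind R S) z + Q h z <= Q G z.
  rewrite -(lrate_scale _ _ (ltW c0)) (_ : G = fun y => c * ind R S y + h y).
    exact: (lrate_superadd (fun y => c * ind R S y) h z).
  by apply: funext => y; rewrite /h addrC subrK.
have := lrate_zero_ge0 h0 hz.
by rewrite -(pmulr_rle0 _ c0); lra.
Qed.

Lemma upper_rate_support_closed (W : X -> R) z : (forall y, 0 <= W y) -> W z = 0 ->
  upper Q W z <= 0 -> upper Q (ind R [set y | 0 < W y]) z <= 0.
Proof.
rewrite /upper => W0 Wz QW; have [c c0 c_le] := pos_lbound W.
pose S := [set y | 0 < W y]; pose h y := W y - c * ind R S y.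
have h0 y : 0 <= h y.
  case: (pselect (S y)) => Sy; first by rewrite /h ind_in // mulr1 subr_ge0 c_le.
  by rewrite /h ind_out // mulr0 subr0.
have hz : h z = 0 by rewrite /h Wz ind_out ?mulr0 ?subr0 // /S /= Wz ltxx.
have split : Q (fun y => - W y) z + Q h z <= c * Q (fun y => - ind R S y) z.
  rewrite -(lrate_scale _ _ (ltW c0)) (_ : (fun y => c * - ind R S y) = fun y => - W y + h y).
    exact: (lrate_superadd (fun y => - W y) h z).
  by apply: funext => y; rewrite /h; ring.
have := lrate_zero_ge0 h0 hz.
by rewrite oppr_le0 -(pmulr_rge0 _ c0); lra.
Qed.

End LowerRateOperator.

Section Comparison.
Variables (R : realType) (X : finType) (Q : op R X).
Hypothesis HQ : lower_rate_op Q.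

Definition halfline_derives (w d : R -> X -> R) :=
  forall r x, 0 <= r -> halfline_derive (fun s => w s x) r (d r x).

Lemma first_nonpos_time (W : R -> X -> R) s0 y0 :
  (forall s y, 0 <= s -> 0 < W s y ->
     exists2 d : R, 0 < d & forall h, 0 < h -> h < d -> 0 < W (s + h) y) ->
  0 <= s0 -> W s0 y0 <= 0 ->
  exists r x, [/\ 0 <= r, W r x <= 0 & forall s y, 0 <= s -> s < r -> 0 < W s y].
Proof.
move=> Wpersist s00 Ws0.
pose E y := [set s : R | 0 <= s /\ W s y <= 0].
have E_hlb y : has_lbound (E y) by exists 0 => s [].
have Py0 : [pred y | `[< E y !=set0 >] ] y0 by apply/asboolP; exists s0.
case: (arg_minP (fun y => inf (E y)) Py0) => x /asboolP Ex inf_min.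
have inf_ge0 : 0 <= inf (E x) by apply: (lb_le_inf Ex) => s [].
exists (inf (E x)), x; split => //.
- rewrite leNgt; apply/negP => Wpos.
  have [d d0 Hd] := Wpersist _ _ inf_ge0 Wpos.
  have [s [s_ge0 Ws] s_lt] := inf_adherent d0 (conj Ex (E_hlb x)).
  have inf_le : inf (E x) <= s := ge_inf (E_hlb x) (conj s_ge0 Ws).
  case: (eqVneq s (inf (E x))) => [s_eq|s_neq]; first by move: Ws; rewrite s_eq leNgt Wpos.
  have := Hd (s - inf (E x)) ltac:(by rewrite subr_gt0 lt_neqAle eq_sym s_neq inf_le) ltac:(lra).
  by rewrite addrC subrK ltNge Ws.
- move=> s y s_ge0 s_lt; rewrite ltNge; apply/negP => Wle.
  have := inf_min y (asboolT (ex_intro _ s (conj s_ge0 Wle))).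
  by have := ge_inf (E_hlb y) (conj s_ge0 Wle : E y s); lra.
Qed.

(* The perturbation [w + e (1 + r)] cannot reach [0]: at the first time [r] it
   does, at the point [z] minimizing it, its left derivative [d r z + e] would be
   [<= 0], whereas [d r z >= Q (w r) z >= 0]. *)
Lemma supersolution_ge0 w d : halfline_derives w d ->
  (forall r x, 0 <= r -> Q (w r) x <= d r x) -> (forall x, 0 <= w 0 x) ->
  forall r x, 0 <= r -> 0 <= w r x.
Proof.
move=> wd Qwd w0.
have perturbed_pos e : 0 < e -> forall r x, 0 <= r -> 0 < w r x + e * (1 + r).
  move=> e0 r0 x0 r00; rewrite ltNge; apply/negP => W_le0.
  pose W r x := w r x + e * (1 + r).
  have W_persist s y : 0 <= s -> 0 < W s y ->
      exists2 del, 0 < del & forall h, 0 < h -> h < del -> 0 < W (s + h) y.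
    move=> s0 Wpos; have [del del0 Hdel] := halfline_derive_right_cont (wd s y s0) s0 Wpos.
    exists del => // h h0 hdel; have := Hdel h h0 hdel; rewrite /W ltr_norml => /andP[+ _].
    have : 0 < e * h by rewrite mulr_gt0.
    by rewrite !mulrDr; lra.
  have [r [x [r_ge0 Wrx Wpos]]] := first_nonpos_time W_persist r00 W_le0.
  have r_gt0 : 0 < r.
    rewrite lt_neqAle r_ge0 andbT; apply/eqP => r_eq0.
    by move: Wrx; rewrite /W -r_eq0 addr0 mulr1; have := w0 x; lra.
  have [z _ z_min] := @arg_minP _ _ _ x predT (W r) isT.
  have deriv_le : d r z + e <= 0.
    apply: halfline_derive_left_min (wd r z r_ge0) r_gt0 _ => s s0 sr.
    by move: Wrx (z_min x isT) (Wpos s z s0 sr); rewrite /W !mulrDr; lra.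
  have : 0 <= Q (w r) z by apply: lrate_min_ge0 => // y; have := z_min y isT; rewrite /W; lra.
  by have := Qwd r z r_ge0; lra.
move=> r x r0; apply/ler_addgt0Pr => e e0.
have := perturbed_pos (e / (1 + r)) ltac:(by rewrite divr_gt0 //; lra) r x r0.
by rewrite divfK ?lt0r_neq0 //; lra.
Qed.

Lemma comparison a b da db : halfline_derives a da -> halfline_derives b db ->
  (forall r x, 0 <= r -> Q (a r) x - Q (b r) x <= da r x - db r x) ->
  (forall x, b 0 x <= a 0 x) -> forall r x, 0 <= r -> b r x <= a r x.
Proof.
move=> ad bd Qab ab0 r x r0; rewrite -subr_ge0.
apply: (@supersolution_ge0 (fun r x => a r x - b r x) (fun r x => da r x - db r x)) => //.
- by move=> s y s0; apply: halfline_deriveB (ad s y s0) (bd s y s0).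
- move=> s y s0; apply: le_trans (Qab s y s0).
  have := lrate_superadd HQ (fun y => a s y - b s y) (b s) y.
  rewrite (_ : (fun y => a s y - b s y + b s y) = a s); first lra.
  by apply: funext => z; rewrite subrK.
- by move=> y; rewrite subr_ge0.
Qed.

End Comparison.

Section MonotoneOperator.
Variables (R : realType) (X : finType).

Definition monotone_op (S : op R X) :=
  forall f g, (forall y, f y <= g y) -> forall y, S f y <= S g y.

Definition homogeneous_op (S : op R X) :=
  forall (c : R) f, 0 <= c -> S (fun y => c * f y) = (fun y => c * S f y).

Definition support_stable (S : op R X) := forall (A : set X) y,
  S (ind R [set z | 0 < S (ind R A) z]) y <= ind R [set z | 0 < S (ind R A) z] y.

Lemma upper_mono S : monotone_op S -> monotone_op (upper S).
Proof. by move=> Smono f g fg y; rewrite lerN2; apply: Smono => z; rewrite lerN2. Qed.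

Lemma upper_homogeneous S : homogeneous_op S -> homogeneous_op (upper S).
Proof.
move=> Shom c f c0; apply: funext => y.
rewrite /upper mulrN -(congr1 (fun F => F y) (Shom c (fun z => - f z) c0)).
by congr (- S _ y); apply: funext => z; rewrite mulrN.
Qed.

Variable S : op R X.
Hypotheses (Smono : monotone_op S) (Shom : homogeneous_op S).

Lemma op_ge0 g : (forall y, 0 <= g y) -> forall y, 0 <= S g y.
Proof.
move=> g0 y; have := Smono (f := fun y => 0 * g y) (g := g) _ y.
by rewrite Shom // mul0r; apply=> z; rewrite mul0r.
Qed.

Lemma op_support_pos g y : (forall z, 0 <= g z) -> 0 < S g y ->
  0 < S (ind R [set z | 0 < g z]) y.
Proof.
move=> g0 Sg_pos; have := Smono (fun z => le_sum_ind z g0) y.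
rewrite Shom ?sumr_ge0 //= => Sg_le; rewrite ltNge; apply/negP => S_le0.
have : (\sum_z g z) * S (ind R [set z | 0 < g z]) y <= 0 by rewrite mulr_ge0_le0 ?sumr_ge0.
by lra.
Qed.

Lemma support_iter (A : set X) n : support_stable S -> (0 < n)%N ->
  forall y, 0 < iter n S (ind R A) y -> 0 < S (ind R A) y.
Proof.
move=> Sstab; elim: n => [//|[//|n] IH] _ y.
have iter_ge0 k z : 0 <= iter k S (ind R A) z.
  by elim: k z => [|k IHk] z; [exact: ind_ge0 | exact: op_ge0].
rewrite iterS => /(op_support_pos (iter_ge0 _.+1)) pos.
have := Smono (le_ind R (fun z => IH isT z)) y.
have := Sstab A y => stab sub.
by apply: ind_gt0; lra.
Qed.

End MonotoneOperator.

Lemma regularly_absorbing_iff_one_step (R : realType) (X : finType) (S : op R X) :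
  monotone_op S -> homogeneous_op S -> support_stable S -> support_stable (upper S) ->
  regularly_absorbing S <-> one_step_absorbing S.
Proof.
move=> Smono Shom Sstab Ustab.
have XRA_1A : X_RA S = X_1A S.
  apply/seteqP; split => x; last by exists 1%N.
  move=> [n [n0 Sn_pos]] y.
  exact: (support_iter (upper_mono Smono) (upper_homogeneous Shom) Ustab n0 (Sn_pos y)).
rewrite /regularly_absorbing /one_step_absorbing XRA_1A.
split=> -[ne reach]; split=> // x x1A.
- by have [n [n0 Sn_pos]] := reach x x1A; exact: (support_iter Smono Shom Sstab n0 Sn_pos).
- by exists 1%N; split => //=; exact: reach.
Qed.

Section LowerSemigroup.
Variables (R : realType) (X : finType) (Q : op R X) (T : R -> op R X).
Hypotheses (HQ : lower_rate_op Q) (HT : is_lower_semigroup Q T).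

Lemma semigroup0 f : T 0 f = f.
Proof. exact: (HT f).1. Qed.

Lemma semigroup_derives f : halfline_derives (fun r => T r f) (fun r => Q (T r f)).
Proof. by move=> r x; apply: (HT f).2. Qed.

Lemma semigroup_mono r : 0 <= r -> monotone_op (T r).
Proof.
move=> r0 f g fg x.
apply: (comparison HQ (@semigroup_derives g) (@semigroup_derives f)) => // y.
by rewrite !semigroup0.
Qed.

Lemma semigroup_homogeneous r : 0 <= r -> homogeneous_op (T r).
Proof.
move=> r0 c f c0; apply: funext => x; apply/eqP; rewrite eq_le.
have cT_derives : halfline_derives (fun s y => c * T s f y) (fun s y => c * Q (T s f) y).
  by move=> s y s0; apply: halfline_deriveMl; apply: semigroup_derives.
have Q_eq s y : Q (fun z => c * T s f z) y = c * Q (T s f) y by rewrite lrate_scale.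
apply/andP; split.
- apply: (comparison HQ cT_derives (@semigroup_derives _)) => // [s y _|y].
    by rewrite Q_eq lexx.
  by rewrite !semigroup0.
- apply: (comparison HQ (@semigroup_derives _) cT_derives) => // [s y _|y].
    by rewrite Q_eq lexx.
  by rewrite !semigroup0.
Qed.

Lemma semigroup_le_stationary f : (forall x, Q f x <= 0) ->
  forall r x, 0 <= r -> T r f x <= f x.
Proof.
move=> Qf_le0 r x r0.
apply: (comparison HQ (fun s y _ => halfline_derive_cst (f y) s) (@semigroup_derives f)) => //.
  by move=> s y _; have := Qf_le0 y; lra.
by move=> y; rewrite semigroup0.
Qed.

Lemma semigroup_ge_stationary f : (forall x, 0 <= Q f x) ->
  forall r x, 0 <= r -> f x <= T r f x.
Proof.
move=> Qf_ge0 r x r0.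
apply: (comparison HQ (@semigroup_derives f) (fun s y _ => halfline_derive_cst (f y) s)) => //.
  by move=> s y _; have := Qf_ge0 y; lra.
by move=> y; rewrite semigroup0.
Qed.

Lemma lower_support_closed (A : set X) t : 0 < t ->
  lower_closed Q [set y | 0 < T t (ind R A) y].
Proof.
move=> t0 z /negP; rewrite -leNgt => Gz_le0.
have G0 s y : 0 <= s -> 0 <= T s (ind R A) y.
  move=> s0; apply: (op_ge0 (semigroup_mono s0) (semigroup_homogeneous s0)) => w.
  exact: ind_ge0.
have Gz : T t (ind R A) z = 0 by apply/eqP; rewrite eq_le Gz_le0 G0 ?ltW.
apply: lrate_support_closed => //; first by move=> y; apply: G0; exact: ltW.
apply: halfline_derive_left_min0 (@semigroup_derives (ind R A) t z (ltW t0)) t0 _ => s s0 _.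
by rewrite Gz G0.
Qed.

Lemma upper_support_closed (A : set X) t : 0 < t ->
  upper_closed Q [set y | 0 < upper (T t) (ind R A) y].
Proof.
move=> t0 z /negP; rewrite -leNgt => Wz_le0.
have W0 s y : 0 <= s -> 0 <= upper (T s) (ind R A) y.
  move=> s0; apply: (op_ge0 (upper_mono (semigroup_mono s0))) => [|w]; last exact: ind_ge0.
  exact: upper_homogeneous (semigroup_homogeneous s0).
have Wz : upper (T t) (ind R A) z = 0 by apply/eqP; rewrite eq_le Wz_le0 W0 ?ltW.
apply: upper_rate_support_closed => //; first by move=> y; apply: W0; exact: ltW.
rewrite {1}/upper (_ : (fun y => - upper (T t) (ind R A) y) = T t (fun y => - ind R A y)).
  apply: halfline_derive_left_min0
    (halfline_deriveN (@semigroup_derives (fun y => - ind R A y) t z (ltW t0))) t0 _ => s s0 _.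
  by have := W0 s z s0; rewrite /upper in Wz *; rewrite Wz.
by apply: funext => y; rewrite /upper opprK.
Qed.

Lemma semigroup_support_stable t : 0 <= t -> support_stable (T t).
Proof.
rewrite le_eqVlt => /orP[/eqP <- | t0] A y; first by rewrite semigroup0.
have Q_le0 := lower_closed_rate HQ (lower_support_closed (A := A) t0).
exact: (@semigroup_le_stationary _ Q_le0 t y (ltW t0)).
Qed.

Lemma semigroup_upper_support_stable t : 0 <= t -> support_stable (upper (T t)).
Proof.
rewrite le_eqVlt => /orP[/eqP <- | t0] A y; first by rewrite /upper !semigroup0 opprK.
set P := [set z | 0 < upper (T t) (ind R A) z].
have Q_ge0 x : 0 <= Q (fun z => - ind R P z) x.
  by have := upper_closed_rate HQ (upper_support_closed (A := A) t0) x; rewrite /upper oppr_le0.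
by have := @semigroup_ge_stationary _ Q_ge0 t y (ltW t0); rewrite /upper; lra.
Qed.

End LowerSemigroup.

Theorem proposition10 (R : realType) (X : finType) (Q : op R X) (T : R -> op R X) :
  lower_rate_op Q -> is_lower_semigroup Q T ->
  forall t : R, 0 <= t ->
    (regularly_absorbing (T t) <-> one_step_absorbing (T t)).
Proof.
move=> HQ HT t t0; apply: regularly_absorbing_iff_one_step.
- exact: semigroup_mono HQ HT t t0.
- exact: semigroup_homogeneous HQ HT t t0.
- exact: semigroup_support_stable HQ HT t t0.
- exact: semigroup_upper_support_stable HQ HT t t0.
Qed.
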